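(* Let $H$ be a real Hilbert space, $T_n:H\to H$ for every $n\in\mathbb{N}$, and $(\gamma_n)$ a sequence of positive reals with $\sum_{n=0}^\infty\gamma_n^2=\infty$. Assume that $(T_n)$ is jointly firmly nonexpansive with respect to $(\gamma_n)$ and that $F:=\bigcap_{n\in\mathbb{N}}Fix(T_n)\neq\emptyset$. Let $x\in H$, $x_0:=x$, $x_{n+1}:=T_nx_n$ for all $n$. Then $(x_n)$ converges weakly to a point of $F$.
   Context: $(T_n)$ is jointly firmly nonexpansive w.r.t. $(\gamma_n)$ if for all $n,m\in\mathbb{N}$, $x,y\in H$, $\alpha,\beta\in[0,1]$ with $(1-\alpha)\gamma_n=(1-\beta)\gamma_m$: $\|T_nx-T_my\|\le\|((1-\alpha)x+\alpha T_nx)-((1-\beta)y+\beta T_my)\|$. $Fix(T)$ is the fixed point set of $T$. *)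

From HB Require Import structures.
From mathcomp Require Import all_boot all_order all_algebra.
From mathcomp Require Import all_classical all_reals all_analysis.
Set Implicit Arguments. Unset Strict Implicit. Unset Printing Implicit Defensive.
Import Order.TTheory GRing.Theory Num.Theory.
Import numFieldNormedType.Exports.
Local Open Scope classical_set_scope.
Local Open Scope ring_scope.

(* A real inner product on V compatible with the norm of V:
   bilinear (linear in the first argument + symmetric) and <x,x> = |x|^2.
   A complete normed space with such an inner product is a real Hilbert space. *)
Definition is_inner_product (R : realType) (V : normedModType R)
    (ip : V -> V -> R) : Prop :=
  [/\ (forall (a : R) (x y z : V), ip (a *: x + y) z = a * ip x z + ip y z),
      (forall x y : V, ip x y = ip y x) &
      (forall x : V, ip x x = `|x| ^+ 2)].

Definition Fix (T : Type) (f : T -> T) : set T := [set x | f x = x].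

Definition jointly_firmly_nonexpansive (R : realType) (V : normedModType R)
    (T : nat -> V -> V) (gamma : nat -> R) : Prop :=
  forall (n m : nat) (x y : V) (alpha beta : R),
    0 <= alpha <= 1 -> 0 <= beta <= 1 ->
    (1 - alpha) * gamma n = (1 - beta) * gamma m ->
    `|T n x - T m y| <=
      `|((1 - alpha) *: x + alpha *: T n x) - ((1 - beta) *: y + beta *: T m y)|.

Fixpoint iter_seq (V : Type) (T : nat -> V -> V) (x : V) (n : nat) : V :=
  match n with
  | 0 => x
  | k.+1 => T k (iter_seq T x k)
  end.

Definition weakly_converges (R : realType) (V : normedModType R)
    (ip : V -> V -> R) (u : nat -> V) (p : V) : Prop :=
  forall y : V, (fun n => ip (u n) y) @ \oo --> ip p y.

(* The Yosida approximations [yosida n x = (x - T n x) / gamma n] satisfy the monotonicity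
   inequality [<T n x - T m y, yosida n x - yosida m y> >= 0]: test joint firm nonexpansiveness
   with weights for which [(1 - alpha) gamma n = (1 - beta) gamma m = t] and let [t -> 0].
   Hence the iterates are Fejer monotone with respect to the common fixed points,
   [|yosida n (x n)|] is nonincreasing and [sum_n gamma n ^2 |yosida n (x n)| ^2] is finite, so
   [yosida n (x n) -> 0] because [sum gamma n ^2] diverges.  By monotonicity again every weak
   cluster point of [(x n)] is a common fixed point, and Opial's argument gives weak
   convergence.  Without a weak topology at hand, weak cluster points are replaced by points
   of the closed convex hulls of all tails; these exist because in a Hilbert space a
   decreasing sequence of nonempty bounded closed convex sets has a common point. *)

From HB Require Import structures.
From mathcomp Require Import all_boot all_order all_algebra.
From mathcomp Require Import all_classical all_reals all_analysis.
From mathcomp Require Import ring lra.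
Import Order.TTheory GRing.Theory Num.Theory.
Import numFieldNormedType.Exports.
Local Open Scope classical_set_scope.
Local Open Scope ring_scope.

Lemma ler_add_small_mul {R : realFieldType} {a c k tau : R} : 0 <= k -> 0 < tau ->
  (forall e, 0 < e -> e <= tau -> a <= c + e * k) -> a <= c.
Proof.
move=> k0 tau0 h; apply/ler_addgt0Pr => e e0.
have k1 : 0 < k + 1 by rewrite ltr_wpDl.
pose t := Num.min tau (e / (k + 1)).
have t0 : 0 < t by rewrite lt_min tau0 divr_gt0.
have tk : t * k <= e.
  apply: (@le_trans _ _ (e / (k + 1) * k)); first by rewrite ler_wpM2r // ge_min lexx orbT.
  by rewrite mulrAC ler_pdivrMr // ler_pM2l //; lra.
by apply: le_trans (h t t0 _) _; rewrite ?lerD2l // ge_min lexx.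
Qed.

Section InnerProduct.
Context {R : realType} {H : normedModType R} {ip : H -> H -> R}.
Hypothesis hip : is_inner_product ip.

Lemma ipC x y : ip x y = ip y x.
Proof. by case: hip. Qed.

Lemma ipxx x : ip x x = `|x| ^+ 2.
Proof. by case: hip. Qed.

Lemma ipDl x y z : ip (x + y) z = ip x z + ip y z.
Proof. by case: hip => lin _ _; have := lin 1 x y z; rewrite scale1r mul1r. Qed.

Lemma ipZl a x z : ip (a *: x) z = a * ip x z.
Proof.
case: hip => lin _ _.
have ip0 : ip 0 z = 0 by have := lin 1 0 0 z; rewrite scaler0 addr0 mul1r; lra.
by rewrite -[a *: x]addr0 lin ip0 addr0.
Qed.

Lemma ip0l z : ip 0 z = 0.
Proof. by rewrite -(scale0r 0) ipZl mul0r. Qed.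

Lemma ip0r z : ip z 0 = 0.
Proof. by rewrite ipC ip0l. Qed.

Lemma ipNl x z : ip (- x) z = - ip x z.
Proof. by rewrite -scaleN1r ipZl mulN1r. Qed.

Lemma ipBl x y z : ip (x - y) z = ip x z - ip y z.
Proof. by rewrite ipDl ipNl. Qed.

Lemma ipDr x y z : ip z (x + y) = ip z x + ip z y.
Proof. by rewrite ipC ipDl !(ipC z). Qed.

Lemma ipZr a x z : ip z (a *: x) = a * ip z x.
Proof. by rewrite ipC ipZl ipC. Qed.

Lemma ipNr x z : ip z (- x) = - ip z x.
Proof. by rewrite ipC ipNl ipC. Qed.

Lemma ipBr x y z : ip z (x - y) = ip z x - ip z y.
Proof. by rewrite ipDr ipNr. Qed.

Lemma normD_sqr x y : `|x + y| ^+ 2 = `|x| ^+ 2 + 2 * ip x y + `|y| ^+ 2.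
Proof. by rewrite -!ipxx !(ipDl, ipDr) (ipC y x); ring. Qed.

Lemma normB_sqr x y : `|x - y| ^+ 2 = `|x| ^+ 2 - 2 * ip x y + `|y| ^+ 2.
Proof. by rewrite normD_sqr ipNr normrN; ring. Qed.

Lemma parallelogram (x y : H) :
  `|x - y| ^+ 2 = 2 * `|x| ^+ 2 + 2 * `|y| ^+ 2 - 4 * `|(2^-1 : R) *: (x + y)| ^+ 2.
Proof.
rewrite normB_sqr normrZ exprMn normD_sqr [`|2^-1 : R|]ger0_norm ?invr_ge0 //.
by field.
Qed.

Lemma ip_le_norm x y : ip x y <= `|x| * `|y|.
Proof.
have [/eqP|xy_neq0] := eqVneq (`|x| * `|y|) 0.
  rewrite mulf_eq0 !normr_eq0 => /orP[]/eqP->.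
    by rewrite ip0l normr0 mul0r.
  by rewrite ip0r normr0 mulr0.
have xy_gt0 : 0 < `|x| * `|y| by rewrite lt_def xy_neq0 mulr_ge0.
have := sqr_ge0 `| `|y| *: x - `|x| *: y|.
rewrite normB_sqr ipZl ipZr !normrZ !normr_id => h.
rewrite -subr_ge0 -(pmulr_rge0 _ xy_gt0); nra.
Qed.

Lemma normr_ip_le x y : `|ip x y| <= `|x| * `|y|.
Proof.
rewrite ler_norml ip_le_norm andbT lerNl -ipNl.
by apply: le_trans (ip_le_norm _ _) _; rewrite normrN.
Qed.

Lemma ipl_continuous y : continuous (ip ^~ y).
Proof.
move=> x; apply/cvgrPdist_le => e e0.
have y1 : 0 < `|y| + 1 by rewrite ltr_wpDl.
near=> z; rewrite -ipBl; apply: le_trans (normr_ip_le _ _) _.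
have : `|x - z| <= e / (`|y| + 1).
  by near: z; apply: cvgr_dist_le; rewrite ?divr_gt0.
rewrite ler_pdivlMr // => h; apply: le_trans h.
by rewrite [in leRHS]mulrDr mulr1 lerDl.
Unshelve. all: by end_near.
Qed.

End InnerProduct.

Section DecreasingConvexSets.
Context {R : realType} {H : completeNormedModType R} {ip : H -> H -> R}.
Hypothesis hip : is_inner_product ip.
Variables (K : nat -> set H) (B : R).
Hypothesis K_decr : forall N M, (N <= M)%N -> K M `<=` K N.
Hypothesis K_mid : forall N a b, K N a -> K N b -> K N (2^-1 *: (a + b)).
Hypothesis K_closed : forall N, closed (K N).
Hypothesis K_small : forall N, exists2 w, K N w & `|w| <= B.

Let sqnorms N := [set `|w| ^+ 2 | w in K N].
Let D N := inf (sqnorms N).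

Let has_inf_sqnorms N : has_inf (sqnorms N).
Proof.
split; first by have [w Kw _] := K_small N; exists (`|w| ^+ 2), w.
by exists 0 => _ [w _ <-]; rewrite sqr_ge0.
Qed.

Let D_le N w : K N w -> D N <= `|w| ^+ 2.
Proof. by move=> Kw; apply: ge_inf; [exact: (has_inf_sqnorms N).2 | exists w]. Qed.

Let D_nondecr : {homo D : N M / (N <= M)%N >-> N <= M}.
Proof.
move=> N M NM; apply: lb_le_inf; first exact: (has_inf_sqnorms M).1.
by move=> _ [w Kw <-]; exact: D_le _ _ (K_decr _ _ NM _ Kw).
Qed.

Let D_cvg : D @ \oo --> sup (range D).
Proof.
apply: nondecreasing_cvgn D_nondecr _; exists (B ^+ 2) => _ [N _ <-].
have [w Kw wB] := K_small N; apply: le_trans (D_le _ _ Kw) _.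
by rewrite lerXn2r ?nnegrE // (le_trans _ wB).
Qed.

Let near_minimizer N : exists w, K N w /\ `|w| ^+ 2 < D N + harmonic N.
Proof.
have [_ [w Kw <-]] := inf_adherent (harmonic_gt0 N) (has_inf_sqnorms N).
by exists w.
Qed.

(* As in the projection theorem, near-minimizers of the norm on [K N] form a Cauchy sequence
   by the parallelogram law. *)
Lemma decr_closed_convex_bigcap_neq0 : (\bigcap_N K N) !=set0.
Proof.
have [w wP] := choice near_minimizer.
have w_dist N M : (N <= M)%N ->
    `|w N - w M| ^+ 2 <= 2 * (D M - D N) + 2 * harmonic N + 2 * harmonic M.
  move=> NM; have [KwN wN] := wP N; have [KwM wM] := wP M.
  have := D_le _ _ (K_mid _ _ _ KwN (K_decr _ _ NM _ KwM)).
  rewrite (parallelogram hip); lra.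
have w_cvg : cvg (w @ \oo).
  apply: cauchy_cvg; apply: cauchy_exP => e e0.
  have e8 : 0 < e ^+ 2 / 8 by rewrite divr_gt0 ?exprn_gt0.
  have [N0 _ N0_small] : \forall N \near \oo,
      `|sup (range D) - D N| < e ^+ 2 / 8 /\ `|harmonic N| < e ^+ 2 / 8.
    near=> N; split; near: N.
      exact: cvgr_dist_lt D_cvg _ e8.
    exact: cvgr0_norm_lt cvg_harmonic _ e8.
  exists (w N0); exists N0 => // M /= N0M.
  rewrite -ball_normE /ball_ /= -(@ltr_pXn2r _ 2) ?nnegrE // ?ltW //.
  have [dN0 hN0] := N0_small N0 (leqnn N0); have [dM hM] := N0_small M N0M.
  have := w_dist _ _ N0M; move: dN0 hN0 dM hM; rewrite !ltr_norml; lra.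
exists (lim (w @ \oo)) => N _.
apply: (closed_cvg (K N) (K_closed N) _ (lim (w @ \oo)) w_cvg).
near=> M; apply: (K_decr N M _ _ (proj1 (wP M))).
by near: M; exact: nbhs_infty_ge.
Unshelve. all: by end_near.
Qed.

End DecreasingConvexSets.
Arguments decr_closed_convex_bigcap_neq0 {R H ip} hip {K B}.

(* [z] lies in the closed convex hull of every tail of [(u n)_(n in S)]; weak cluster points
   along [S] are such points. *)
Definition tail_hull_point {R : realType} {H : normedModType R}
    (ip : H -> H -> R) (u : nat -> H) (S : set nat) (z : H) : Prop :=
  forall v c, (\forall n \near \oo, S n -> ip (u n) v <= c) -> ip z v <= c.

Definition fejer_monotone {R : realType} {H : normedModType R}
    (u : nat -> H) (F : set H) : Prop :=
  forall q, F q -> forall n, `|u n.+1 - q| <= `|u n - q|.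

Section TailHulls.
Context {R : realType} {H : normedModType R} {ip : H -> H -> R}.
Hypothesis hip : is_inner_product ip.
Context {u : nat -> H}.

Lemma tail_hull_pointT {S z} : tail_hull_point ip u S z -> tail_hull_point ip u setT z.
Proof. by move=> zS v c uc; apply: zS; apply: filterS uc => n uc_n _; exact: uc_n. Qed.

Lemma tail_hull_point_le {S z v} {a : nat -> R} {l} : tail_hull_point ip u S z ->
  a @ \oo --> l -> (\forall n \near \oo, ip (u n) v <= a n) -> ip z v <= l.
Proof.
move=> zS al ua; apply/ler_addgt0Pr => e e0; apply: zS.
near=> n; move=> _; apply: (@le_trans _ _ (a n)); first by near: n.
have : `|l - a n| < e by near: n; exact: cvgr_dist_lt al _ e0.
by rewrite ltr_norml => /andP[]; lra.
Unshelve. all: by end_near.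
Qed.

Lemma tail_hull_point_cvg {S z v l} : tail_hull_point ip u S z ->
  (fun n => ip (u n) v) @ \oo --> l -> ip z v = l.
Proof.
move=> zS ul; apply/eqP; rewrite eq_le (tail_hull_point_le zS ul) /=; last by near=> n.
rewrite -lerN2 -(ipNr hip); apply: (tail_hull_point_le zS (cvgN ul)).
by near=> n; rewrite (ipNr hip).
Unshelve. all: by end_near.
Qed.

Lemma fejer_bounded {F q} n : fejer_monotone u F -> F q -> `|u n| <= `|q| + `|u 0%N - q|.
Proof.
move=> uF Fq; rewrite -[u n](subrK q) (le_trans (ler_normD _ _)) // addrC lerD2l.
by elim: n => // n IH; apply: le_trans IH; exact: uF.
Qed.

End TailHulls.

Section WeakClusterPoints.
Context {R : realType} {H : completeNormedModType R} {ip : H -> H -> R}.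
Hypothesis hip : is_inner_product ip.
Context {u : nat -> H}.

Lemma tail_hull_point_exists {B S} : (forall n, `|u n| <= B) ->
  (forall N, exists2 n, (N <= n)%N & S n) -> exists z, tail_hull_point ip u S z.
Proof.
move=> uB S_inf.
pose bound N (vc : H * R) := forall n, (N <= n)%N -> S n -> ip (u n) vc.1 <= vc.2.
pose K N := \bigcap_(vc in bound N) [set w | ip w vc.1 <= vc.2].
have K_decr N M : (N <= M)%N -> K M `<=` K N.
  by move=> NM w Kw vc Nvc; apply: Kw => n Mn; apply: Nvc; exact: leq_trans Mn.
have K_mid N a b : K N a -> K N b -> K N (2^-1 *: (a + b)).
  move=> Ka Kb vc Nvc; have := Ka vc Nvc; have := Kb vc Nvc.
  rewrite /= (ipZl hip) (ipDl hip); lra.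
have K_closed N : closed (K N).
  apply: closed_bigI => vc _.
  have := proj1 (continuous_closedP _) (ipl_continuous hip vc.1) _ (@closed_le _ vc.2).
  by apply.
have K_small N : exists2 w, K N w & `|w| <= B.
  by have [n Nn Sn] := S_inf N; exists (u n) => // vc Nvc; exact: Nvc.
have [z Kz] := decr_closed_convex_bigcap_neq0 hip K_decr K_mid K_closed K_small.
by exists z => v c [N _ uc]; apply: (Kz N I (v, c)) => n Nn; exact: uc.
Qed.

Lemma tail_hull_point_weak_cvg {B} p : (forall n, `|u n| <= B) ->
  (forall z, tail_hull_point ip u setT z -> z = p) -> weakly_converges ip u p.
Proof.
move=> uB hull_p.
have ev_lt y e : 0 < e -> \forall n \near \oo, ip (u n) y < ip p y + e.
  move=> e0; apply: contrapT => not_ev.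
  pose S := [set n | ip p y + e <= ip (u n) y].
  have S_inf N : exists2 n, (N <= n)%N & S n.
    apply: contrapT => noS; apply: not_ev; exists N => // n /= Nn.
    by rewrite ltNge; apply/negP => Sn; apply: noS; exists n.
  have [z zS] := tail_hull_point_exists uB S_inf.
  have S_bound : \forall n \near \oo, S n -> ip (u n) (- y) <= - (ip p y + e).
    by near=> n; rewrite (ipNr hip) lerN2.
  have := zS _ _ S_bound; rewrite (ipNr hip) (hull_p z (tail_hull_pointT zS)); lra.
move=> y; apply/cvgrPdist_lt => e e0; near=> n.
have ub : ip (u n) y < ip p y + e by near: n; exact: ev_lt.
have : ip (u n) (- y) < ip p (- y) + e by near: n; exact: ev_lt.
by rewrite !(ipNr hip) ltr_norml => lb; apply/andP; split; lra.
Unshelve. all: by end_near.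
Qed.

Theorem fejer_weak_cvg {F : set H} : F !=set0 -> fejer_monotone u F ->
  (forall z, tail_hull_point ip u setT z -> F z) ->
  exists2 p, F p & weakly_converges ip u p.
Proof.
move=> [q Fq] uF hullF.
have uB n : `|u n| <= `|q| + `|u 0%N - q| := fejer_bounded n uF Fq.
have [z zT] := tail_hull_point_exists (S := setT) uB (fun N => ex_intro2 _ _ N (leqnn N) I).
exists z; first exact: hullF.
apply: tail_hull_point_weak_cvg uB _ => z' z'T.
have dist_cvg q' : F q' -> cvg ((fun n => `|u n - q'| ^+ 2) @ \oo).
  move=> Fq'; have d_cvg : cvg ((fun n => `|u n - q'|) @ \oo).
    apply: nonincreasing_is_cvgn; last by exists 0 => _ [n _ <-].
    by apply/nonincreasing_seqP => n; exact: uF.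
  by apply: is_cvgM.
set v := z' - z.
(* Opial's identity: the inner products are a combination of two convergent distances. *)
have ip_cvg : cvg ((fun n => ip (u n) v) @ \oo).
  have -> : (fun n => ip (u n) v) = fun n =>
      2^-1 * (`|u n - z| ^+ 2 - `|u n - z'| ^+ 2 + (`|z'| ^+ 2 - `|z| ^+ 2)).
    by apply: funext => n; rewrite !(normB_sqr hip) (ipBr hip); field.
  apply: is_cvgM; first exact: is_cvg_cst.
  by apply: is_cvgD; [apply: is_cvgB; apply: dist_cvg; apply: hullF | exact: is_cvg_cst].
have : `|v| ^+ 2 = 0.
  by rewrite -(ipxx hip) {1}/v (ipBl hip) (tail_hull_point_cvg hip zT ip_cvg)
    (tail_hull_point_cvg hip z'T ip_cvg) subrr.
by move/eqP; rewrite sqrf_eq0 normr_eq0 subr_eq0 => /eqP.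
Qed.

End WeakClusterPoints.

Section JointlyFirmlyNonexpansive.
Context {R : realType} {H : normedModType R} {ip : H -> H -> R}.
Hypothesis hip : is_inner_product ip.
Context {T : nat -> H -> H} {gamma : nat -> R}.
Hypothesis gamma_gt0 : forall n, 0 < gamma n.
Hypothesis T_jfne : jointly_firmly_nonexpansive T gamma.

(* If [T n] is the resolvent of [gamma n A], then [yosida n] is the Yosida approximation of
   [A], and [yosida n x] lies in [A (T n x)]. *)
Definition yosida n x := (gamma n)^-1 *: (x - T n x).

Lemma yosida_comb n t z :
  (1 - (1 - t / gamma n)) *: z + (1 - t / gamma n) *: T n z = T n z + t *: yosida n z.
Proof.
by rewrite /yosida scalerA subKr scalerBl scale1r scalerBr addrCA.
Qed.

Lemma jfne_monotone n m x y : 0 <= ip (T n x - T m y) (yosida n x - yosida m y).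
Proof.
set w := T n x - T m y; set d := yosida n x - yosida m y.
have tau0 : 0 < Num.min (gamma n) (gamma m) by rewrite lt_min !gamma_gt0.
suff: 0 <= 2 * ip w d by rewrite pmulr_rge0.
apply: (ler_add_small_mul (sqr_ge0 `|d|) tau0) => t t0; rewrite le_min => /andP[tn tm].
have weight k : t <= gamma k -> 0 <= 1 - t / gamma k <= 1.
  move=> tk; rewrite subr_ge0 ler_pdivrMr ?gamma_gt0 // mul1r tk /=.
  by rewrite lerBlDr lerDl divr_ge0 ?(ltW t0) ?(ltW (gamma_gt0 k)).
have := T_jfne n m x y _ _ (weight n tn) (weight m tm).
rewrite !yosida_comb !subKr !mulfVK ?gt_eqF ?gamma_gt0 // => /(_ erefl).
have -> : T n x + t *: yosida n x - (T m y + t *: yosida m y) = w + t *: d.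
  by rewrite /w /d scalerBr opprD addrACA.
move=> le_w; have : `|w| ^+ 2 <= `|w + t *: d| ^+ 2 by rewrite lerXn2r ?nnegrE.
rewrite [X in _ <= X](normD_sqr hip) (ipZr hip) normrZ exprMn (ger0_norm (ltW t0)) => h.
have : 0 <= t * (2 * ip w d + t * `|d| ^+ 2) by lra.
by rewrite pmulr_rge0.
Qed.

Section Iteration.
Variable x : H.
Let xs := iter_seq T x.
Let F := \bigcap_k Fix (T k).

Lemma iter_fejer q n : F q ->
  `|xs n.+1 - q| ^+ 2 + `|xs n - xs n.+1| ^+ 2 <= `|xs n - q| ^+ 2.
Proof.
move=> Fq; have Tq k : T k q = q by exact: Fq k I.
have := jfne_monotone n n (xs n) q; rewrite -/(xs n.+1).
rewrite /yosida Tq subrr scaler0 subr0 (ipZr hip) pmulr_rge0 ?invr_gt0 // => h.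
rewrite -[xs n - q](subrKA (xs n.+1)) [xs n - _ + _]addrC [leRHS](normD_sqr hip); lra.
Qed.

Lemma iter_fejer_monotone : fejer_monotone xs F.
Proof.
move=> q Fq n; rewrite -(@ler_pXn2r _ 2) ?nnegrE //.
by have := iter_fejer q n Fq; have := sqr_ge0 `|xs n - xs n.+1|; lra.
Qed.

Lemma iter_step_norm n : `|xs n - xs n.+1| = gamma n * `|yosida n (xs n)|.
Proof.
rewrite /yosida normrZ ger0_norm ?invr_ge0 ?(ltW (gamma_gt0 n)) // mulrA.
by rewrite mulfV ?gt_eqF // mul1r.
Qed.

Lemma iter_yosida_nonincr :
  {homo (fun n => `|yosida n (xs n)|) : n m / (n <= m)%N >-> m <= n}.
Proof.
apply/nonincreasing_seqP => n /=.
set a := yosida n.+1 (xs n.+1); set b := yosida n (xs n).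
have : 0 <= ip (T n.+1 (xs n.+1) - T n (xs n)) (a - b) := jfne_monotone _ _ _ _.
have -> : T n.+1 (xs n.+1) - T n (xs n) = - (gamma n.+1 *: a).
  by rewrite /a /yosida scalerA mulfV ?gt_eqF // scale1r opprB.
rewrite (ipNl hip) (ipZl hip) (ipBr hip) (ipxx hip) oppr_ge0 pmulr_rle0 // subr_le0.
move=> /le_trans /(_ (ip_le_norm hip a b)) a_le_b.
have [->|a_neq0] := eqVneq a 0; first by rewrite normr0.
by move: a_le_b; rewrite expr2 ler_pM2l ?normr_gt0.
Qed.

Lemma iter_yosida_sqr_series_le p N : F p ->
  `|yosida N (xs N)| ^+ 2 * [series gamma k ^+ 2]_k N <= `|x - p| ^+ 2.
Proof.
move=> Fp.
have telescope M :
    `|xs M - p| ^+ 2 + \sum_(0 <= k < M) `|xs k - xs k.+1| ^+ 2 <= `|x - p| ^+ 2.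
  elim: M => [|M IH]; first by rewrite big_geq // addr0.
  by rewrite big_nat_recr //=; have := iter_fejer p M Fp; lra.
apply: le_trans (telescope N); rewrite -[leLHS]add0r lerD ?sqr_ge0 //.
rewrite /series /= mulr_sumr big_nat [leLHS]big_nat; apply: ler_sum => k /andP[_ kN].
rewrite iter_step_norm exprMn mulrC ler_wpM2l ?sqr_ge0 // lerXn2r ?nnegrE //.
exact: iter_yosida_nonincr (ltnW kN).
Qed.

Hypothesis F_neq0 : F !=set0.
Hypothesis gamma_sqr_dvg : [series gamma k ^+ 2]_k @ \oo --> +oo.

Lemma iter_yosida_cvg0 : (fun n => `|yosida n (xs n)|) @ \oo --> 0.
Proof.
have [p Fp] := F_neq0; set C := `|x - p| ^+ 2.
apply/cvgr0Pnorm_le => e e0.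
have e2 : 0 < e ^+ 2 by rewrite exprn_gt0.
have C1 : 0 < C + 1 by rewrite ltr_wpDl ?sqr_ge0.
near=> N; rewrite normr_id.
have : (C + 1) / e ^+ 2 <= [series gamma k ^+ 2]_k N.
  by near: N; move/cvgryPge : gamma_sqr_dvg; apply.
set S := [series gamma k ^+ 2]_k N => SN.
have S0 : 0 < S by apply: lt_le_trans SN; rewrite divr_gt0.
rewrite -(@ler_pXn2r _ 2) ?nnegrE ?(ltW e0) //.
rewrite -(ler_pM2r S0); apply: le_trans (iter_yosida_sqr_series_le p N Fp) _.
by move: SN; rewrite ler_pdivrMr // -/C; lra.
Unshelve. all: by end_near.
Qed.

Lemma iter_tail_hull_point_fix z : tail_hull_point ip xs setT z -> F z.
Proof.
move=> zT m _; rewrite /Fix /=; set w := T m z; set h := yosida m z.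
have [p Fp] := F_neq0; set B := `|p| + `|x - p|.
have xsB n : `|xs n| <= B := fejer_bounded n iter_fejer_monotone Fp.
suff : ip (z - w) h <= 0.
  rewrite /h /yosida -/w (ipZr hip) (ipxx hip) pmulr_rle0 ?invr_gt0 // => le0.
  by apply/esym/eqP; rewrite -subr_eq0 -normr_eq0 -sqrf_eq0 eq_le le0 sqr_ge0.
rewrite (ipBl hip) subr_le0.
have Bw : 0 <= B + `|w| by rewrite addr_ge0 // (le_trans _ (xsB 0%N)).
apply: (ler_add_small_mul Bw ltr01) => e e0 _; apply: zT.
(* Monotonicity against the pairs [(xs n.+1, yosida n (xs n))], whose second entries vanish. *)
have [N _ smallN] : \forall n \near \oo, `| `|yosida n (xs n)| | <= e.
  exact: cvgr0_norm_le iter_yosida_cvg0 _ e0.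
exists N.+1 => // -[|n] //= Nn _.
have := jfne_monotone n m (xs n) z; rewrite -/(xs n.+1) -/w -/h (ipBr hip) subr_ge0.
have := ip_le_norm hip (xs n.+1 - w) (yosida n (xs n)).
have : `|xs n.+1 - w| * `|yosida n (xs n)| <= (B + `|w|) * e.
  apply: ler_pM => //; first by apply: le_trans (ler_normB _ _) _; rewrite lerD2r.
  by have := smallN n Nn; rewrite /= normr_id.
rewrite !(ipBl hip); lra.
Qed.

End Iteration.

End JointlyFirmlyNonexpansive.

Theorem theorem3p15 (R : realType) (H : completeNormedModType R)
    (ip : H -> H -> R) (hip : is_inner_product ip)
    (T : nat -> H -> H) (gamma : nat -> R)
    (hgamma_pos : forall n, 0 < gamma n)
    (hgamma_sum : [series gamma k ^+ 2]_k @ \oo --> +oo)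
    (hjfne : jointly_firmly_nonexpansive T gamma)
    (hF : (\bigcap_n Fix (T n)) !=set0)
    (x : H) :
  exists2 p : H, p \in \bigcap_n Fix (T n) &
    weakly_converges ip (iter_seq T x) p.
Proof.
have [p Fp weak] := fejer_weak_cvg hip hF (iter_fejer_monotone hip hgamma_pos hjfne x)
  (iter_tail_hull_point_fix hip hgamma_pos hjfne x hF hgamma_sum).
by exists p; first exact/mem_set.
Qed.
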